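(* (SEM-ME) Let $M$ be a canonical linear SEM-ME satisfying SEM-ME faithfulness part (a). Then there is a total order on the ancestral ordered groups of $M$ such that, for every model $M'$ in the AOG equivalence class of $M$, every edge of $M'$ between variables lying in two different ancestral ordered groups goes from the earlier group to the later group. (SEM-UR) The analogous statement holds for a linear SEM-UR $M$ satisfying SEM-UR faithfulness part (a) and any $M'$ in its AOG equivalence class.
   Context: Linear SEM-ME (canonical form): underlying variables $V_1,\dots,V_p$ partitioned into unobserved $\mathcal Z$ and observed $\mathcal Y$, $V_i=\sum_{V_j\in Pa(V_i)}c_{ij}V_j+N_{V_i}$ over a DAG (edge $V_j\to V_i$ iff $c_{ij}\ne0$), measurements $U_i=Z_i+N_{U_i}$, independent noises. A u-leaf node is a $Z$-variable with no children; all others are nu-leaf nodes; in canonical form u-leaf nodes have zero noise and nu-leaf nodes nondegenerate noise. Since observedness of non-leaf variables does not affect the mixing matrix, a model is specified by its weighted DAG on the underlying variables and its set of u-leaf nodes. The mixing matrix $\mathbf W^{ME}$ has rows indexed by underlying variables, columns by noise terms $N_{V'}$ of nu-leaf nodes, $(V,N_{V'})$ entry = total causal effect of $V'$ on $V$ (sum over directed paths of products of weights; $1$ if $V=V'$). Linear SEM-UR: $H=N_H$, $X=\mathbf BH+\mathbf AX+N_X$ with $\mathbf A$ strictly lower triangular, independent noises; diagram has edges $H_i\to X_j$ iff $b_{ji}\neq0$ and $X_k\to X_j$ iff $a_{jk}\ne 0$; mixing matrix $\mathbf W^{UR}=[(\mathbf I-\mathbf A)^{-1}\mathbf B\;\;(\mathbf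 I-\mathbf A)^{-1}]$ with rows indexed by observed variables and columns by noise terms. $Pa,Ch,An,De$ denote parents, children, ancestors, descendants, with $An(V),De(V)$ excluding $V$. Faithfulness part (a): SEM-ME: the total causal effect of any underlying variable on any of its descendants is nonzero. SEM-UR: the total causal effect of any observed or latent variable on any of its descendants is nonzero. Ancestral ordered grouping (AOG). SEM-ME: each nu-leaf node is put in its own group; each u-leaf node $Z_j$ is put in the group of a parent $V_i$ if $Z_j$ has no other parents or all other parents of $Z_j$ are ancestors of $V_i$; otherwise $Z_j$ forms a singleton group. SEM-UR: each observed variable is put in its own group; each latent $H_j$ is put in the group of a child $X_i$ if $H_j$ has no other children or all other children of $H_j$ are descendants of $X_i$; otherwise $H_j$ forms a singleton group. AOG equivalence class of $M$: SEM-ME: the set of canonical SEM-ME models on the same underlying variables whose mixing matrix equals that of $M$ up to permutation and nonzero scaling of columns (rows matched by variable) and whose AOG is the same partition. SEM-UR: the set of SEM-UR models on the same observed variables with the same number of latent variables whose mixing matrix equals that of $M$ up to permutation and nonzero scaling of columns and whose AOG coincides with that of $M$ (up to relabeling latent variables). *)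

From HB Require Import structures.
From mathcomp Require Import all_boot all_order all_algebra.
Set Implicit Arguments. Unset Strict Implicit. Unset Printing Implicit Defensive.
Import Order.TTheory GRing.Theory Num.Theory.
Local Open Scope ring_scope.

(* Convention: G i j = weight c_ij of the edge j -> i (edge iff != 0).  *)
Section Graph.
Variable R : fieldType.
Variable p : nat.
Implicit Types G : 'M[R]_p.

Definition edge G : rel 'I_p := fun j i => G i j != 0.

Definition reach G : rel 'I_p := connect (edge G).

Definition desc G (j i : 'I_p) : bool := (i != j) && reach G j i.

Definition is_dag G : Prop := forall i j, edge G j i -> ~~ reach G i j.

(* total causal effect of j on i: sum over directed paths from j to i of
   the product of the edge weights (1 if i = j).  The (i,j) entry of G^k is
   the sum over directed walks of length k from j to i of the products of
   weights; in a DAG on p nodes walks are paths and have length < p. *)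
Definition total_effect G (i j : 'I_p) : R := (\sum_(k < p) G ^+ k) i j.

Definition parents G (v : 'I_p) : {set 'I_p} := [set i | G v i != 0].
Definition childless G (v : 'I_p) : bool := [forall i, G i v == 0].
End Graph.

(* Linear SEM-ME (canonical form): weighted DAG C on the p underlying   *)
(* variables, U = set of u-leaf nodes (Z-variables without children).   *)
Section SEMME.
Variable R : fieldType.
Variable p : nat.
Implicit Types (C : 'M[R]_p) (U : {set 'I_p}).

Definition sem_me C U : Prop :=
  is_dag C /\ (forall v, v \in U -> childless C v).

Definition me_faithful_a C : Prop :=
  forall j i, desc C j i -> total_effect C i j != 0.

(* Mixing matrix W^ME: rows = all underlying variables v, columns = noise
   terms N_j of the nu-leaf nodes j (j \notin U); entry = total_effect C v j.
   Equality up to permutation and nonzero scaling of columns: *)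
Definition me_mixing_equiv C U C' U' : Prop :=
  exists sigma : 'I_p -> 'I_p,
    {in ~: U &, injective sigma} /\ sigma @: (~: U) = ~: U' /\
    exists lam : 'I_p -> R, forall j, j \in ~: U ->
      lam j != 0 /\ forall v, total_effect C v j = lam j * total_effect C' v (sigma j).

(* Ancestral ordered grouping: representative of the group of v.
   nu-leaf nodes represent their own group; a u-leaf Z joins the group of a
   parent V_i all of whose other parents are ancestors of V_i (such a parent
   is unique in a DAG); otherwise Z is a singleton. *)
Definition aog_rep C U (v : 'I_p) : 'I_p :=
  if v \in U then
    odflt v [pick i | (i \in parents C v) &&
                      [forall k, ((k \in parents C v) && (k != i)) ==> desc C k i]]
  else v.

Definition aog_group C U (v : 'I_p) : {set 'I_p} :=
  [set w | aog_rep C U w == aog_rep C U v].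

Definition aog C U : {set {set 'I_p}} := [set aog_group C U v | v : 'I_p].

Definition me_aog_class C U C' U' : Prop :=
  sem_me C' U' /\ me_mixing_equiv C U C' U' /\ aog C' U' = aog C U.
End SEMME.

(* Linear SEM-UR: l latent H, n observed X; X = B H + A X + N_X.        *)
(* Diagram on the nodes 'I_(l + n): lshift n i = H_i, rshift l j = X_j. *)
Section SEMUR.
Variable R : fieldType.
Variables l n : nat.
Implicit Types (B : 'M[R]_(n, l)) (A : 'M[R]_n).

Definition strictly_lower A : Prop := forall j k : 'I_n, (j <= k)%N -> A j k = 0.

Definition ur_graph B A : 'M[R]_(l + n) :=
  \matrix_(u, v) match split u, split v with
                 | inr j, inl i => B j i
                 | inr j, inr k => A j k
                 | _, _ => 0
                 end.

Definition ur_faithful_a B A : Prop :=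
  forall u v, desc (ur_graph B A) u v -> total_effect (ur_graph B A) v u != 0.

Definition ur_mixing B A : 'M[R]_(n, l + n) :=
  row_mx (invmx (1%:M - A) *m B) (invmx (1%:M - A)).

Definition ur_mixing_equiv B A B' A' : Prop :=
  exists sigma : 'I_(l + n) -> 'I_(l + n), injective sigma /\
    exists lam : 'I_(l + n) -> R, forall c,
      lam c != 0 /\ forall r, ur_mixing B A r c = lam c * ur_mixing B' A' r (sigma c).

(* AOG representative: observed variables represent themselves; a latent H_j
   joins the group of a child X_i all of whose other children are
   descendants of X_i; otherwise H_j is a singleton. *)
Definition ur_aog_rep B A (u : 'I_(l + n)) : 'I_(l + n) :=
  match split u with
  | inl j =>
      match [pick i : 'I_n | (B i j != 0) &&
               [forall k : 'I_n, ((B k j != 0) && (k != i)) ==>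
                   desc (ur_graph B A) (rshift l i) (rshift l k)]] with
      | Some i => rshift l i
      | None => u
      end
  | inr _ => u
  end.

Definition ur_aog_group B A (u : 'I_(l + n)) : {set 'I_(l + n)} :=
  [set w | ur_aog_rep B A w == ur_aog_rep B A u].

Definition ur_aog B A : {set {set 'I_(l + n)}} := [set ur_aog_group B A u | u : 'I_(l + n)].

Definition relabel (pi : 'I_l -> 'I_l) (u : 'I_(l + n)) : 'I_(l + n) :=
  match split u with
  | inl i => lshift n (pi i)
  | inr j => rshift l j
  end.

(* M' = (B', A') lies in the AOG equivalence class of M = (B, A), the AOG
   coincidence being witnessed by the latent relabeling pi *)
Definition ur_aog_class B A B' A' (pi : 'I_l -> 'I_l) : Prop :=
  strictly_lower A' /\ ur_mixing_equiv B A B' A' /\ injective pi /\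
  ur_aog B' A' = [set relabel pi @: S | S : {set 'I_(l + n)} in ur_aog B A].
End SEMUR.

(* The order is given by a numeric label of the
   group representative.

   SEM-ME.  Total effects form the matrix [effect_mx C = \sum_k C ^+ k]; for a
   DAG it inverts [1 - C], so the support of C is controlled by the support of
   [effect_mx C] (lemma [supported_of_effect]).  Matching columns of the mixing
   matrices through sigma, faithfulness shows that a nu-leaf k of M either is
   fixed by sigma or becomes in M' a u-leaf whose AOG parent is sigma k; with
   the equality of AOGs this gives [rep (sigma k) = k].  Hence every nonzero
   total effect of M', and then every edge j -> i of M', satisfies
   [reach C (rep j) (rep i)]; a topological numbering of C orders the groups.

   SEM-UR.  A strictly lower triangular A makes the node index a topological
   numbering; a latent variable joining the group of a child X_i in M does so
   in M' as well, which forces its children in M' to lie at or below X_i.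
   Here only the coincidence of the AOGs is needed, not the mixing matrix. *)
From HB Require Import structures.
From mathcomp Require Import all_boot all_order all_algebra.
From mathcomp Require Import zify.
Set Implicit Arguments. Unset Strict Implicit. Unset Printing Implicit Defensive.
Import Order.TTheory GRing.Theory Num.Theory.
Local Open Scope ring_scope.

(* Support of a matrix inside a preorder [rl] on the indices: a nonzero
   entry (i, j) only occurs when [rl j i].  Such matrices form a subring,
   which is how path-sum arguments about supports are organised below. *)
Section Support.
Variables (R : fieldType) (p : nat) (rl : rel 'I_p).
Hypotheses (rl_refl : reflexive rl) (rl_trans : transitive rl).

Definition supported (M : 'M[R]_p) : Prop := forall i j, M i j != 0 -> rl j i.

Lemma supported0 : supported 0.
Proof. by move=> i j; rewrite mxE eqxx. Qed.

Lemma supported1 : supported 1.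
Proof.
by move=> i j; rewrite mxE; case: (eqVneq i j) => [-> _|]; [apply: rl_refl | rewrite eqxx].
Qed.

Lemma supportedD M N : supported M -> supported N -> supported (M + N).
Proof.
move=> sM sN i j; rewrite mxE.
by case: (eqVneq (M i j) 0) => [->|/sM //]; rewrite add0r; apply: sN.
Qed.

Lemma supportedN M : supported M -> supported (- M).
Proof. by move=> sM i j; rewrite mxE oppr_eq0; apply: sM. Qed.

Lemma supportedM M N : supported M -> supported N -> supported (M * N).
Proof.
move=> sM sN i j; rewrite -mulmxE mxE; apply: contraNT => not_rl.
rewrite big1 // => x _; apply/eqP; rewrite mulf_eq0.
case: (eqVneq (M i x) 0) => //= /sM rl_xi; apply/negPn/negP => /sN rl_jx.
by rewrite (rl_trans rl_jx rl_xi) in not_rl.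
Qed.

Lemma supportedX M m : supported M -> supported (M ^+ m).
Proof.
move=> sM; elim: m => [|m IHm]; first by rewrite expr0; apply: supported1.
by rewrite exprS; apply: supportedM.
Qed.

Lemma supported_sum (F : 'I_p -> 'M[R]_p) :
  (forall k, supported (F k)) -> supported (\sum_(k < p) F k).
Proof.
by move=> sF; apply: (big_ind supported); [apply: supported0 | apply: supportedD | move=> k _].
Qed.
End Support.

(* Reachability in a DAG: the number of ancestors [pot] strictly increases
   along nontrivial directed paths, which yields a topological numbering. *)
Section DAG.
Variables (R : fieldType) (p : nat) (G : 'M[R]_p).

Lemma reach_refl : reflexive (reach G).
Proof. exact: connect0. Qed.

Lemma reach_trans : transitive (reach G).
Proof. by move=> y x z; apply: connect_trans. Qed.

Lemma reach_last a b : reach G a b -> a != b -> exists2 x, reach G a x & edge G x b.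
Proof.
case/connectP=> s; elim/last_ind: s b => [|s x _] b /=; first by move=> _ ->; rewrite eqxx.
rewrite rcons_path last_rcons => /andP[path_s e_xb] -> _.
by exists (last a s) => //; apply/connectP; exists s.
Qed.

Hypothesis dagG : is_dag G.

Lemma reach_antisym a b : reach G a b -> reach G b a -> a = b.
Proof.
move=> r_ab r_ba; apply/eqP; apply: contraT => ne_ab.
have [x r_ax e_xb] := reach_last r_ab ne_ab.
by move: (dagG e_xb); rewrite /reach (connect_trans r_ba r_ax).
Qed.

Definition pot (v : 'I_p) : nat := #|[set u | reach G u v]|.

Lemma pot_bounds v : (0 < pot v <= p)%N.
Proof.
apply/andP; split; first by apply/card_gt0P; exists v; rewrite inE /reach connect0.
by rewrite -[X in (_ <= X)%N]card_ord max_card.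
Qed.

Lemma pot_reach a b : reach G a b -> a != b -> (pot a < pot b)%N.
Proof.
move=> r_ab ne_ab; apply: proper_card; rewrite properE; apply/andP; split.
  by apply/subsetP=> u; rewrite !inE => r_ua; apply: connect_trans r_ua r_ab.
apply/subsetPn; exists b; first by rewrite inE /reach connect0.
by rewrite inE; apply: contra ne_ab => r_ba; rewrite (reach_antisym r_ab r_ba).
Qed.

Lemma pot_edge j i : edge G j i -> (pot j < pot i)%N.
Proof.
move=> e_ji; apply: pot_reach; first exact: connect1.
by apply: contraNneq (dagG e_ji) => ->; apply: connect0.
Qed.

Lemma reach_maximal (P : pred 'I_p) q : P q ->
  exists2 m, P m && reach G q m & forall x, P x -> reach G m x -> x = m.
Proof.
move=> Pq; pose Q := [pred x | P x && reach G q x].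
have Qq : Q q by rewrite inE /= Pq /reach connect0.
have [m /andP[Pm r_qm] max_m] := @arg_maxnP _ q Q pot Qq.
exists m => [|x Px r_mx]; first by rewrite Pm.
apply/eqP; apply: contraT => ne_xm.
have Qx : Q x by rewrite inE /= Px; apply: connect_trans r_qm r_mx.
by have /= := max_m x Qx; rewrite leqNgt (pot_reach r_mx) // eq_sym.
Qed.

Definition topo_key (v : 'I_p) : nat := (pot v * p + v)%N.

Lemma topo_key_inj : injective topo_key.
Proof.
move=> a b /(congr1 (modn^~ p)); rewrite /topo_key !modnMDl !modn_small //.
by move/val_inj.
Qed.

Lemma topo_key_lt a b : reach G a b -> a != b -> (topo_key a < topo_key b)%N.
Proof.
move=> r_ab ne_ab; have := pot_reach r_ab ne_ab; rewrite /topo_key.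
have := ltn_ord a; have := ltn_ord b; nia.
Qed.
End DAG.

Section TotalEffect.
Variables (R : fieldType) (p : nat) (G : 'M[R]_p).

Definition effect_mx : 'M[R]_p := \sum_(k < p) G ^+ k.

Lemma reach_of_effect v j : total_effect G v j != 0 -> reach G j v.
Proof.
have s_TE : supported (reach G) effect_mx.
  apply: supported_sum => k; apply: supportedX; [exact: reach_refl | exact: reach_trans|].
  by move=> i j' e; apply: connect1.
exact: s_TE.
Qed.

Hypothesis dagG : is_dag G.

Lemma pow_pot m i j : (G ^+ m) i j != 0 -> (pot G j + m <= pot G i)%N.
Proof.
elim: m i => [|m IHm] i.
  by rewrite expr0 mxE; case: (eqVneq i j) => [->|]; rewrite ?addn0 ?eqxx.
rewrite exprS -mulmxE mxE; apply: contraNT; rewrite -ltnNge => lt_i.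
rewrite big1 // => x _; apply/eqP; rewrite mulf_eq0.
case: (eqVneq (G i x) 0) => //= /(pot_edge dagG) lt_xi.
by apply/negPn/negP => /IHm; lia.
Qed.

Lemma pow_nilpotent : G ^+ p = 0.
Proof.
apply/matrixP=> i j; rewrite [RHS]mxE; apply/eqP; apply: contraT => /pow_pot.
by have := pot_bounds G i; have := pot_bounds G j; lia.
Qed.

Lemma total_effect_diag j : total_effect G j j = 1.
Proof.
have p_gt0 : (0 < p)%N by apply: leq_ltn_trans (ltn_ord j).
rewrite /total_effect summxE (bigD1 (Ordinal p_gt0)) //= expr0 mxE eqxx big1 ?addr0 //.
move=> k ne_k0; apply/eqP; apply: contraT => /pow_pot.
have : (k : nat) != 0%N by apply: contraNneq ne_k0 => k0; apply/eqP/val_inj.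
lia.
Qed.

Lemma effect_mx_left : effect_mx = 1 + G * effect_mx.
Proof.
transitivity (\sum_(k < p.+1) G ^+ k); first by rewrite big_ord_recr /= pow_nilpotent addr0.
by rewrite big_ord_recl expr0 mulr_sumr; congr (_ + _); apply: eq_bigr => k _; rewrite exprS.
Qed.

Lemma effect_mx_right : effect_mx = 1 + effect_mx * G.
Proof.
transitivity (\sum_(k < p.+1) G ^+ k); first by rewrite big_ord_recr /= pow_nilpotent addr0.
by rewrite big_ord_recl expr0 mulr_suml; congr (_ + _); apply: eq_bigr => k _; rewrite exprSr.
Qed.

Lemma total_effect_row k q :
  total_effect G k q = (k == q)%:R + \sum_x G k x * total_effect G x q.
Proof. by rewrite /total_effect -/effect_mx {1}effect_mx_left !mxE. Qed.

Lemma total_effect_col k q :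
  total_effect G k q = (k == q)%:R + \sum_x total_effect G k x * G x q.
Proof. by rewrite /total_effect -/effect_mx {1}effect_mx_right !mxE. Qed.

(* The support of [G] is controlled by that of its effect matrix: with the
   nilpotent [N := effect_mx - 1] one has [G = N - N * G], so [G] is an
   alternating sum of powers of [N]. *)
Lemma supported_of_effect rl : reflexive rl -> transitive rl ->
  supported rl effect_mx -> supported rl G.
Proof.
move=> rl_refl rl_trans s_TE; set N := effect_mx - 1.
have s_N : supported rl N by apply: supportedD s_TE (supportedN (supported1 rl_refl)).
have N_l : G * effect_mx = N by rewrite /N [X in _ = X - _]effect_mx_left addrC addKr.
have N_r : effect_mx * G = N by rewrite /N [X in _ = X - _]effect_mx_right addrC addKr.
have G_N : G = N - N * G by rewrite {2}/N mulrBl mul1r N_r opprB addrC subrK.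
have N_nil : N ^+ p = 0.
  by rewrite -N_l exprMn_comm ?pow_nilpotent ?mul0r // /GRing.comm N_l N_r.
(* [N ^+ m * G] is supported, by induction on how far m is from p *)
suff s_NG d m : (p <= m + d)%N -> supported rl (N ^+ m * G).
  by have := s_NG p 0%N (leq_addl _ _); rewrite expr0 mul1r.
elim: d m => [|d IHd] m le_p.
  by rewrite addn0 in le_p; rewrite -(subnK le_p) exprD N_nil mulr0 mul0r; apply: supported0.
rewrite {1}G_N mulrBr mulrA -exprSr; apply: supportedD; first exact: supportedX.
by apply: supportedN; apply: IHd; rewrite addSnnS.
Qed.
End TotalEffect.

Section GroupLabel.
Variables (T : finType) (r : T -> T) (key : T -> nat).

Definition rep_group (u : T) : {set T} := [set w | r w == r u].

Definition group_label (S : {set T}) : nat :=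
  if [pick w in S] is Some w then key (r w) else 0%N.

Lemma rep_group_eq u v : r u = r v -> rep_group u = rep_group v.
Proof. by move=> ruv; apply/setP=> w; rewrite !inE ruv. Qed.

Lemma group_labelE u : group_label (rep_group u) = key (r u).
Proof.
rewrite /group_label; case: pickP => [w|/(_ u)]; first by rewrite inE => /eqP ->.
by rewrite inE eqxx.
Qed.

Lemma group_label_inj : injective key ->
  {in [set rep_group u | u : T] &, injective group_label}.
Proof.
move=> key_inj _ _ /imsetP[u _ ->] /imsetP[v _ ->].
by rewrite !group_labelE => /key_inj; apply: rep_group_eq.
Qed.
End GroupLabel.

Lemma aog_rep_nu (R : fieldType) (p : nat) (C : 'M[R]_p) (U : {set 'I_p}) v :
  v \notin U -> aog_rep C U v = v.
Proof. by move=> nu_v; rewrite /aog_rep (negbTE nu_v). Qed.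

(* SEM-ME.  For M = (C, U) faithful and M' = (C', U') in its AOG class,
   every edge j -> i of C' satisfies [reach C (rep j) (rep i)] where [rep]
   is the AOG representative in M. *)
Section SEMMEOrder.
Variables (R : fieldType) (p : nat) (C : 'M[R]_p) (U : {set 'I_p}).
Hypotheses (semC : sem_me C U) (faithC : me_faithful_a C).

Let dagC : is_dag C. Proof. by case: semC. Qed.

Local Notation rep := (aog_rep C U).

Lemma effect_of_reach k v : reach C k v -> total_effect C v k != 0.
Proof.
move=> r_kv; case: (eqVneq v k) => [->|ne_vk]; first by rewrite total_effect_diag ?oner_eq0.
by apply: faithC; rewrite /desc ne_vk.
Qed.

Lemma reach_aog_rep k v : k \notin U -> reach C k v -> reach C k (rep v).
Proof.
move=> nu_k r_kv; case: (boolP (v \in U)) => [u_v|/aog_rep_nu -> //].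
rewrite /aog_rep u_v; case: pickP => [i /andP[_ /forallP anc_i]|_] //=.
have ne_kv : k != v by apply: contraNneq nu_k => ->.
have [q r_kq e_qv] := reach_last r_kv ne_kv.
case: (eqVneq q i) => [<- //|ne_qi].
have /implyP := anc_i q; rewrite inE -/(edge C q v) e_qv ne_qi => /(_ isT) /andP[_ r_qi].
exact: connect_trans r_kq r_qi.
Qed.

Section Equivalent.
Variables (C' : 'M[R]_p) (U' : {set 'I_p}) (sigma : 'I_p -> 'I_p) (lam : 'I_p -> R).
Hypothesis semC' : sem_me C' U'.
Hypothesis sigma_inj : {in ~: U &, injective sigma}.
Hypothesis sigma_im : sigma @: (~: U) = ~: U'.
Hypothesis mixing : forall j, j \in ~: U -> lam j != 0 /\
  forall v, total_effect C v j = lam j * total_effect C' v (sigma j).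
Hypothesis aog_eq : aog C' U' = aog C U.

Let dagC' : is_dag C'. Proof. by case: semC'. Qed.

Local Notation rep' := (aog_rep C' U').

Lemma effect_sigma k v : k \in ~: U ->
  (total_effect C v k != 0) = (total_effect C' v (sigma k) != 0).
Proof. by move=> nu_k; have [lam_k ->] := mixing nu_k; rewrite mulf_eq0 negb_or lam_k. Qed.

Lemma sigma_nu k : k \in ~: U -> sigma k \in ~: U'.
Proof. by move=> nu_k; rewrite -sigma_im imset_f. Qed.

Lemma reach_of_effect' k v : k \in ~: U ->
  total_effect C' v (sigma k) != 0 -> reach C k v.
Proof. by move=> nu_k; rewrite -effect_sigma //; apply: reach_of_effect. Qed.

Lemma reach'_sigma k m : k \in ~: U -> m \in ~: U ->
  reach C k (sigma m) -> reach C' (sigma k) (sigma m).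
Proof. by move=> nu_k nu_m /effect_of_reach; rewrite effect_sigma //; apply: reach_of_effect. Qed.

Lemma reach_sigma k : k \in ~: U -> reach C k (sigma k).
Proof. by move=> nu_k; apply: reach_of_effect'; rewrite // total_effect_diag ?oner_eq0. Qed.

Lemma sigma_reach' k : k \in ~: U -> reach C' (sigma k) k.
Proof.
by move=> nu_k; apply: reach_of_effect; rewrite -effect_sigma // total_effect_diag ?oner_eq0.
Qed.

Lemma childless' v i : v \in U' -> C' i v = 0.
Proof. by case: semC' => _ childU /childU /forallP /(_ i) /eqP. Qed.

Lemma moved_uleaf k : k \in ~: U -> sigma k != k -> sigma k \in U.
Proof.
move=> nu_k moved; apply: contraT; rewrite -in_setC => nu_sk.
have r1 := reach'_sigma nu_k nu_sk (connect_trans (reach_sigma nu_k) (reach_sigma nu_sk)).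
have r2 := reach'_sigma nu_sk nu_k (connect0 _ _).
by rewrite (sigma_inj nu_sk nu_k (reach_antisym dagC' r2 r1)) eqxx in moved.
Qed.

Lemma moved_uleaf' k : k \in ~: U -> sigma k != k -> k \in U'.
Proof.
move=> nu_k moved; apply: contraT; rewrite -in_setC -sigma_im => /imsetP[k2 nu_k2 k_def].
case: (eqVneq (sigma k2) k2) => [fix_k2|moved_k2].
  by move: moved; rewrite k_def !fix_k2 eqxx.
by move: nu_k; rewrite inE k_def moved_uleaf.
Qed.

(* a parent q of a moved k with no other parent of k below it is sigma k:
   the edge q -> k is then the only path from q to k *)
Lemma top_parent_sigma k q : k \in ~: U -> sigma k != k -> C' k q != 0 ->
  (forall x, C' k x != 0 -> reach C' q x -> x = q) -> q = sigma k.
Proof.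
move=> nu_k moved e_qk top_q.
have ne_kq : k != q by apply: contraNneq (dagC' e_qk) => ->; apply: connect0.
have te_qk : total_effect C' k q = C' k q.
  rewrite total_effect_row // (negbTE ne_kq) add0r (bigD1 q) //= (total_effect_diag dagC') mulr1.
  rewrite big1 ?addr0 // => x ne_xq; apply/eqP; rewrite mulf_eq0.
  case: (eqVneq (C' k x) 0) => //= e_xk; apply: contraT => /reach_of_effect r_qx.
  by rewrite (top_q x e_xk r_qx) eqxx in ne_xq.
have : q \in ~: U' by rewrite inE; apply: contra e_qk => /childless' ->.
rewrite -sigma_im => /imsetP[k2 nu_k2 q_def].
have r_k2k : reach C k2 k by apply: reach_of_effect'; rewrite // -q_def te_qk.
have r_qsk : reach C' q (sigma k).
  by rewrite q_def; apply: reach'_sigma => //; apply: connect_trans r_k2k (reach_sigma nu_k).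
have [x r_skx e_xk] := reach_last (sigma_reach' nu_k) moved.
have x_q : x = q by apply: top_q e_xk (connect_trans r_qsk r_skx).
rewrite x_q in r_skx; exact: (reach_antisym dagC' r_qsk r_skx).
Qed.

Lemma parent_sigma k q : k \in ~: U -> sigma k != k -> C' k q != 0 ->
  C' k (sigma k) != 0 /\ reach C' q (sigma k).
Proof.
move=> nu_k moved e_qk.
have [m /andP[e_mk r_qm] top_m] := reach_maximal dagC' (P := fun x => C' k x != 0) e_qk.
by rewrite -(top_parent_sigma nu_k moved e_mk top_m).
Qed.

Lemma aog_rep'_moved k : k \in ~: U -> sigma k != k -> rep' k = sigma k.
Proof.
move=> nu_k moved.
have [q _ e_qk] := reach_last (sigma_reach' nu_k) moved.
have [e_sk _] := parent_sigma nu_k moved e_qk.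
have anc_sk x : x \in parents C' k -> x != sigma k -> desc C' x (sigma k).
  by rewrite inE => e_xk ne_x; rewrite /desc eq_sym ne_x; case: (parent_sigma nu_k moved e_xk).
rewrite /aog_rep (moved_uleaf' nu_k moved); case: pickP => [i /andP[par_i /forallP anc_i]|none].
  apply/eqP; apply: contraT => ne_i.
  have /implyP := anc_i (sigma k); rewrite inE e_sk eq_sym ne_i => /(_ isT) /andP[_ r1].
  by have /andP[_ r2] := anc_sk i par_i ne_i; rewrite (reach_antisym dagC' r1 r2) eqxx in ne_i.
have /negP[] := none (sigma k); rewrite inE e_sk /=; apply/forallP => x.
by apply/implyP => /andP[]; apply: anc_sk.
Qed.

Lemma aog_rep_sigma k : k \in ~: U -> rep (sigma k) = k.
Proof.
move=> nu_k; have rep_k : rep k = k by apply: aog_rep_nu; rewrite -in_setC.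
case: (eqVneq (sigma k) k) => [-> //|moved].
have : aog_group C U k \in aog C' U' by rewrite aog_eq imset_f.
case/imsetP => w _ grp_k.
have rep'_sk : rep' (sigma k) = sigma k by apply: aog_rep_nu; rewrite -in_setC sigma_nu.
have : k \in aog_group C' U' w by rewrite -grp_k inE.
rewrite inE (aog_rep'_moved nu_k moved) => /eqP rep'_w.
have : sigma k \in aog_group C' U' w by rewrite inE rep'_sk rep'_w.
by rewrite -grp_k inE rep_k => /eqP.
Qed.

Definition rep_reach (a b : 'I_p) : bool := reach C (rep a) (rep b).

Lemma rep_reach_refl : reflexive rep_reach.
Proof. by move=> a; apply: connect0. Qed.

Lemma rep_reach_trans : transitive rep_reach.
Proof. by move=> b a c; apply: connect_trans. Qed.

Lemma effect'_supported : supported rep_reach (effect_mx C').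
Proof.
move=> v j te_vj; case: (boolP (j \in U')) => [u_j|nu_j].
  move: te_vj; rewrite -[_ v j]/(total_effect C' v j) total_effect_col //.
  rewrite big1 ?addr0 => [|x _]; last by rewrite childless' ?mulr0.
  by case: (eqVneq v j) => [->|]; rewrite ?eqxx //; move=> _; apply: rep_reach_refl.
have : j \in ~: U' by rewrite inE.
rewrite -sigma_im => /imsetP[k nu_k j_def]; subst j.
rewrite /rep_reach aog_rep_sigma //; apply: reach_aog_rep; first by rewrite -in_setC.
exact: reach_of_effect' te_vj.
Qed.

Lemma edge'_rep_reach j i : edge C' j i -> reach C (rep j) (rep i).
Proof.
apply: (supported_of_effect dagC' rep_reach_refl rep_reach_trans effect'_supported).
Qed.
End Equivalent.
End SEMMEOrder.

(* SEM-UR.  Since A is strictly lower triangular, every edge of the diagram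
   goes from a lower to a higher node index (latent nodes come first), so the
   node index itself is a topological numbering. *)
Section SEMUROrder.
Variables (R : fieldType) (l n : nat).
Implicit Types (B : 'M[R]_(n, l)) (A : 'M[R]_n).

Lemma split_lshift (i : 'I_l) : split (lshift n i) = inl i.
Proof. exact: (unsplitK (inl i)). Qed.

Lemma split_rshift (j : 'I_n) : split (rshift l j) = inr j.
Proof. exact: (unsplitK (inr j)). Qed.

Lemma ur_edge_lt B A x y : strictly_lower A -> edge (ur_graph B A) x y -> (x < y)%N.
Proof.
move=> lowA; rewrite /edge mxE.
case: (splitP y) => [j y_j|j y_j]; first by rewrite eqxx.
case: (splitP x) => [k x_k|k x_k] e_xy; rewrite y_j x_k; first by have := ltn_ord k; lia.
have : ~~ (j <= k)%N by apply: contra e_xy => /lowA ->.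
lia.
Qed.

Lemma ur_reach_le B A x y : strictly_lower A -> reach (ur_graph B A) x y -> (x <= y)%N.
Proof.
move=> lowA /connectP[s]; elim: s x => [|z s IHs] x /=; first by move=> _ ->.
by case/andP=> /(ur_edge_lt lowA) lt_xz /IHs{}IHs /IHs; lia.
Qed.

Lemma ur_aog_rep_observed B A (j : 'I_n) : ur_aog_rep B A (rshift l j) = rshift l j.
Proof. by rewrite /ur_aog_rep split_rshift. Qed.

Lemma ur_aog_rep_latent B A (j : 'I_l) :
  ur_aog_rep B A (lshift n j) = lshift n j \/
  exists i, ur_aog_rep B A (lshift n j) = rshift l i.
Proof.
rewrite /ur_aog_rep split_lshift; case: pickP => [i _|_]; [by right; exists i | by left].
Qed.

Lemma ur_child_of_rep B A (j : 'I_l) i b : strictly_lower A ->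
  ur_aog_rep B A (lshift n j) = rshift l i -> B b j != 0 -> (i <= b)%N.
Proof.
move=> lowA; rewrite /ur_aog_rep split_lshift.
case: pickP => [i' /andP[_ /forallP below_i'] /rshift_inj i'_i|_ /eqP]; last first.
  by rewrite eq_sym eq_rlshift.
subst i'; move=> e_jb; case: (eqVneq b i) => [-> //|ne_bi].
have /implyP := below_i' b; rewrite e_jb ne_bi => /(_ isT) /andP[_ /(ur_reach_le lowA)].
by rewrite /=; lia.
Qed.

Lemma ur_aog_rep_relabel B A B' A' (pi : 'I_l -> 'I_l) (j : 'I_l) i :
  ur_aog B' A' = [set relabel pi @: S | S : {set 'I_(l + n)} in ur_aog B A] ->
  ur_aog_rep B A (lshift n j) = rshift l i ->
  ur_aog_rep B' A' (lshift n (pi j)) = rshift l i.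
Proof.
move=> aog_eq rep_j.
have : relabel pi @: ur_aog_group B A (lshift n j) \in ur_aog B' A'.
  by rewrite aog_eq; apply: imset_f; apply: imset_f.
case/imsetP=> w _ grp_def.
have : lshift n (pi j) \in ur_aog_group B' A' w.
  by rewrite -grp_def; apply/imsetP; exists (lshift n j); rewrite ?inE // /relabel split_lshift.
rewrite inE => /eqP ->.
have : rshift l i \in ur_aog_group B' A' w.
  rewrite -grp_def; apply/imsetP; exists (rshift l i).
    by rewrite inE ur_aog_rep_observed rep_j.
  by rewrite /relabel split_rshift.
by rewrite inE ur_aog_rep_observed => /eqP.
Qed.

Lemma ur_edge_rep_lt B A B' A' (pi : 'I_l -> 'I_l) u v : strictly_lower A' ->
  ur_aog B' A' = [set relabel pi @: S | S : {set 'I_(l + n)} in ur_aog B A] ->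
  edge (ur_graph B' A') (relabel pi u) (relabel pi v) ->
  ur_aog_rep B A u != ur_aog_rep B A v ->
  (ur_aog_rep B A u < ur_aog_rep B A v)%N.
Proof.
move=> lowA' aog_eq; rewrite /relabel.
case: (splitP v) => [b _|b v_b]; first by rewrite /edge mxE split_lshift eqxx.
have -> : v = rshift l b by apply: val_inj.
rewrite ur_aog_rep_observed; case: (splitP u) => [j u_j|a u_a].
  have -> : u = lshift n j by apply: val_inj.
  case: (ur_aog_rep_latent B A j) => [-> _ _|[i rep_j]].
    by have := ltn_ord j; rewrite /=; lia.
  rewrite /edge mxE split_rshift split_lshift rep_j => e_jb ne_ib.
  have le_ib := ur_child_of_rep lowA' (ur_aog_rep_relabel aog_eq rep_j) e_jb.
  have : (i : nat) != b by apply: contraNneq ne_ib => /val_inj ->.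
  by rewrite /=; lia.
have -> : u = rshift l a by apply: val_inj.
by rewrite ur_aog_rep_observed => /(ur_edge_lt lowA').
Qed.
End SEMUROrder.

(* Both parts: the groups are ordered by the label of their representative,
   a topological number of the DAG of M (SEM-ME) or the node index (SEM-UR). *)
Theorem proposition1 (R : realFieldType) :
  (forall (p : nat) (C : 'M[R]_p) (U : {set 'I_p}),
     sem_me C U -> me_faithful_a C ->
     exists f : {set 'I_p} -> nat,
       {in aog C U &, injective f} /\
       forall (C' : 'M[R]_p) (U' : {set 'I_p}), me_aog_class C U C' U' ->
         forall j i : 'I_p, edge C' j i ->
           aog_group C U j != aog_group C U i ->
           (f (aog_group C U j) < f (aog_group C U i))%N)
  /\
  (forall (l n : nat) (B : 'M[R]_(n, l)) (A : 'M[R]_n),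
     strictly_lower A -> ur_faithful_a B A ->
     exists f : {set 'I_(l + n)} -> nat,
       {in ur_aog B A &, injective f} /\
       forall (B' : 'M[R]_(n, l)) (A' : 'M[R]_n) (pi : 'I_l -> 'I_l),
         ur_aog_class B A B' A' pi ->
         forall u v : 'I_(l + n), edge (ur_graph B' A') (relabel pi u) (relabel pi v) ->
           ur_aog_group B A u != ur_aog_group B A v ->
           (f (ur_aog_group B A u) < f (ur_aog_group B A v))%N).
Proof.
split.
- move=> p C U semC faithC.
  exists (group_label (aog_rep C U) (topo_key C)); split.
    exact: group_label_inj (@topo_key_inj _ _ C).
  move=> C' U' [semC' [[sigma [sigma_inj [sigma_im [lam mixing]]]] aog_eq]] j i e_ji ne_grp.
  rewrite !group_labelE; apply: topo_key_lt; first by case: semC.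
    exact: (edge'_rep_reach semC faithC semC' sigma_inj sigma_im mixing aog_eq e_ji).
  by apply: contra ne_grp => /eqP/rep_group_eq same_grp; apply/eqP; exact: same_grp.
- move=> l n B A _ _.
  exists (group_label (ur_aog_rep B A) (@nat_of_ord _)); split.
    by apply: group_label_inj; apply: val_inj.
  move=> B' A' pi [lowA' [_ [_ aog_eq]]] u v e_uv ne_grp.
  rewrite !group_labelE; apply: ur_edge_rep_lt lowA' aog_eq e_uv _.
  by apply: contra ne_grp => /eqP/rep_group_eq same_grp; apply/eqP; exact: same_grp.
Qed.
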